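(* Let $A$ be a $C$-algebra. \begin{enumerate} \item Let $\mathcal{M}$ be the partially ordered set consisting of $A$-submodules of $A\otimes A$ of the form $\overline{A\otimes M}$ where $M$ runs through $C$-submodules of $A$. If $\mathcal{M}$ does not satisfy the ascending chain condition, then $\text{Ш}_C(A)$ of weight zero does not satisfy the ascending chain condition for Baxter ideals. \item If $A$ is not a noetherian ring, then $\text{Ш}_C(A)$ of any weight does not satisfy the ascending chain condition for Baxter ideals. \end{enumerate}
   Context: $C$ is a commutative ring, $\lambda\in C$. $\text{Ш}_C(A)=\bigoplus_{k\in\mathbb{N}}A^{\otimes(k+1)}$ is the shuffle (free) Baxter $C$-algebra of weight $\lambda$ on $A$: product $(x_0\otimes\cdots\otimes x_m)(y_0\otimes\cdots\otimes y_n)=x_0y_0\otimes(\text{sum of mixable shuffles of } x_1\cdots x_m \text{ and } y_1\cdots y_n)$, where in a mixable shuffle some adjacent pairs $x_i$ followed by $y_j$ are merged into $x_iy_j$ with a factor $\lambda$ per merger; Baxter operator $P_A(x_0\otimes\cdots\otimes x_n)=\mathbf{1}_A\otimes x_0\otimes\cdots\otimes x_n$. A Baxter ideal is an ideal $I$ with $P_A(I)\subseteq I$. $A\otimes A$ is an $A$-module via the left tensor factor, and for a $C$-submodule $M\subseteq A$, $\overline{A\otimes M}$ denotes the subgroup of $A\otimes A$ generated by $a\otimes b$, $a\in A$, $b\in M$ (the image of $A\otimes M\to A\otimes A$). *)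

From HB Require Import structures.
From mathcomp Require Import all_boot all_algebra.
From mathcomp Require Import finmap.
From mathcomp.multinomials Require Import monalg.

Set Implicit Arguments.
Unset Strict Implicit.
Unset Printing Implicit Defensive.

Import GRing.Theory.
Local Open Scope ring_scope.

Definition submod (R : nzRingType) (V : lmodType R) (S : V -> Prop) : Prop :=
  [/\ S 0, (forall x y, S x -> S y -> S (x + y)) & (forall (c : R) x, S x -> S (c *: x))].

Definition span (R : nzRingType) (V : lmodType R) (G : V -> Prop) : V -> Prop :=
  fun x => forall S : V -> Prop, submod S -> (forall y, G y -> S y) -> S x.

Definition ring_ideal (A : comNzRingType) (I : A -> Prop) : Prop :=
  [/\ I 0, (forall x y, I x -> I y -> I (x + y)) & (forall a x, I x -> I (a * x))].

Definition acc (T : Type) (P : (T -> Prop) -> Prop) : Prop :=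
  forall I : nat -> T -> Prop,
    (forall n, P (I n)) ->
    (forall n x, I n x -> I n.+1 x) ->
    exists n, forall m, (n <= m)%N -> I m = I n.

Definition noetherian (A : comNzRingType) : Prop := acc (@ring_ideal A).

(* Ш_C(A) = (+)_k A^{(x)(k+1)} is realised as the quotient F/N, where  *)
(* F is the free C-module on words (x0, [x1;...;xn]) (pure tensors     *)
(* x0 (x) x1 (x) ... (x) xn) and N is the C-span of the multilinearity *)
(* relations ([tensor_rel]).                                           *)

Section Shuffle.
Context (C : comNzRingType) (A : comAlgType C).

Definition tword := (A * seq A)%type.
Definition Fsh := {malg C[tword]}.

(* word with given list of letters (nonempty in use) *)
Definition wd (s : seq A) : tword := (head 0 s, behead s).

Definition tensor_rel (f : Fsh) : Prop :=
  (exists (u v : seq A) (a b : A),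
      f = << wd (u ++ (a + b) :: v) >> - << wd (u ++ a :: v) >> - << wd (u ++ b :: v) >>)
  \/ (exists (u v : seq A) (c : C) (a : A),
      f = << wd (u ++ (c *: a) :: v) >> - c *: << wd (u ++ a :: v) >>).

Variable lam : C.

(* Sum of mixable shuffles of xs and ys (weight lam), as a formal list
   of (coefficient, word); given by the standard (quasi-shuffle)
   recursion. *)
Fixpoint mshuffle (xs : seq A) : seq A -> seq (C * seq A) :=
  fix msh_in (ys : seq A) :=
  match xs, ys with
  | [::], _ => [:: (1, ys)]
  | _, [::] => [:: (1, xs)]
  | x :: xs', y :: ys' =>
      [seq (p.1, x :: p.2) | p <- mshuffle xs' ys] ++
      [seq (p.1, y :: p.2) | p <- msh_in ys'] ++
      [seq (lam * p.1, (x * y) :: p.2) | p <- mshuffle xs' ys']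
  end.

Definition wmul (u v : tword) : Fsh :=
  \sum_(p <- mshuffle u.2 v.2) p.1 *: << (u.1 * v.1, p.2) >>.

Definition shmul (f g : Fsh) : Fsh :=
  \sum_(u <- msupp f) \sum_(v <- msupp g) (f@_u * g@_v) *: wmul u v.

Definition shP (f : Fsh) : Fsh :=
  \sum_(u <- msupp f) f@_u *: << ((1 : A), u.1 :: u.2) >>.

(* Baxter ideals of Ш_C(A), represented by their preimages in F: the
   C-submodules of F containing N, stable under multiplication by
   arbitrary elements and under P.  (Ideals of F/N correspond bijectively
   and inclusion-preservingly to such subsets.) *)
Definition baxter_ideal (I : Fsh -> Prop) : Prop :=
  [/\ submod I,
      (forall f, tensor_rel f -> I f),
      (forall f g, I f -> I (shmul f g) /\ I (shmul g f))
    & (forall f, I f -> I (shP f))].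

End Shuffle.

(* A (x) A as quotient of the free C-module on pairs, and the          *)
(* submodules  \overline{A (x) M}  (represented by preimages).         *)

Section Tensor2.
Context (C : comNzRingType) (A : comAlgType C).

Definition Ft2 := {malg C[(A * A)%type]}.

Definition tensor2_rel (f : Ft2) : Prop :=
  (exists a a' b : A, f = << (a + a', b) >> - << (a, b) >> - << (a', b) >>)
  \/ (exists a b b' : A, f = << (a, b + b') >> - << (a, b) >> - << (a, b') >>)
  \/ (exists (c : C) (a b : A), f = << (c *: a, b) >> - c *: << (a, b) >>)
  \/ (exists (c : C) (a b : A), f = << (a, c *: b) >> - c *: << (a, b) >>).

(* preimage in Ft2 of the image of A (x) M -> A (x) A *)
Definition tensorAM (M : A -> Prop) : Ft2 -> Prop :=
  span (fun f => tensor2_rel f \/ exists a b : A, M b /\ f = << (a, b) >>).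

Definition calM (S : Ft2 -> Prop) : Prop :=
  exists M : A -> Prop, submod M /\ S = tensorAM M.

End Tensor2.

(* Both parts transport a non-stabilising chain into Baxter ideals of Ш_C(A)
   by an inclusion-reflecting monotone map.  Call a set G of pure tensors
   (words) absorbing if it is stable under P_A and every term of a mixable
   shuffle of a G-word with any word either has coefficient 0 or is again a
   G-word.  Then the span of G and of the multilinearity relations is a Baxter
   ideal: the product of a word with a relation lies in the span of the
   relations, because the mixable shuffle product is multilinear in each tensor
   slot.  For an ideal I of A, the words with a letter in I are absorbing, and
   the projection onto A = A^(x)1 recovers I.  In weight zero merged letters
   carry a zero coefficient, so for S = A (x) M the words with a letter b of
   positive degree such that A (x) b lies in S are absorbing, and the
   projection onto A^(x)2 recovers S. *)

From Pilot Require Import Defs.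
From HB Require Import structures.
From mathcomp Require Import all_boot all_algebra finmap.
From mathcomp.multinomials Require Import monalg.
From Stdlib Require Import FunctionalExtensionality PropExtensionality.

Set Implicit Arguments.
Unset Strict Implicit.
Unset Printing Implicit Defensive.

Import GRing.Theory.
Local Open Scope ring_scope.

Section Submodules.
Context (R : nzRingType) (V : lmodType R).
Implicit Types (S G : V -> Prop).

Lemma submod0 S : submod S -> S 0.
Proof. by case. Qed.

Lemma submodD S x y : submod S -> S x -> S y -> S (x + y).
Proof. by case=> _ SD _; apply: SD. Qed.

Lemma submodZ S c x : submod S -> S x -> S (c *: x).
Proof. by case=> _ _ SZ; apply: SZ. Qed.

Lemma submod_sum S (I : Type) (r : seq I) (P : pred I) (F : I -> V) :
  submod S -> (forall i, P i -> S (F i)) -> S (\sum_(i <- r | P i) F i).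
Proof.
by move=> SS FS; apply: (big_ind S) => // [|x y]; [apply: submod0 | apply: submodD].
Qed.

Lemma span_submod G : submod (Defs.span G).
Proof.
split=> [S [] //|x y Gx Gy S SS GS|c x Gx S SS GS].
  by apply: submodD (Gx S SS GS) (Gy S SS GS).
exact: submodZ (Gx S SS GS).
Qed.

Lemma span_gen G x : G x -> Defs.span G x.
Proof. by move=> Gx S _; apply. Qed.

Lemma span_ind G S : submod S -> (forall x, G x -> S x) -> forall x, Defs.span G x -> S x.
Proof. by move=> SS GS x; apply. Qed.

Lemma span_mono G G' : (forall x, G x -> G' x) -> forall x, Defs.span G x -> Defs.span G' x.
Proof. by move=> GG'; apply: span_ind (@span_submod G') _ => x /GG' /span_gen. Qed.

End Submodules.

Lemma chain_mono (T : Type) (I : nat -> T -> Prop) :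
  (forall n x, I n x -> I n.+1 x) -> forall n m x, (n <= m)%N -> I n x -> I m x.
Proof.
move=> Iinc n m x /subnK <-; elim: (m - n)%N => // k IHk /IHk.
exact: Iinc.
Qed.

Lemma acc_embedding (T U : Type) (P : (T -> Prop) -> Prop) (Q : (U -> Prop) -> Prop)
    (F : (T -> Prop) -> U -> Prop) :
  (forall X, P X -> Q (F X)) ->
  (forall X Y, (forall x, X x -> Y x) -> forall u, F X u -> F Y u) ->
  (forall X Y, P X -> P Y -> (forall u, F X u -> F Y u) -> forall x, X x -> Y x) ->
  acc Q -> acc P.
Proof.
move=> PQ Fmono Frefl accQ I PI Iinc.
have [N HN] := accQ (fun n => F (I n)) (fun n => PQ _ (PI n)) (fun n => Fmono _ _ (Iinc n)).
exists N => m leNm; apply: functional_extensionality => x.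
apply: propositional_extensionality; split; last exact: chain_mono.
by apply: Frefl (PI m) (PI N) _ x => u; rewrite (HN m leNm).
Qed.

Section LinearExtension.
Context (C : comNzRingType) (K : choiceType) (V : lmodType C).
Implicit Types (h : K -> V) (f : {malg C[K]}).

Definition lin h f : V := \sum_(k <- msupp f) f@_k *: h k.

Lemma linEw h f (d : {fset K}) :
  (msupp f `<=` d)%fset -> lin h f = \sum_(k <- d) f@_k *: h k.
Proof.
move=> le_fd; rewrite /lin (big_fset_incl _ le_fd) // => k _ /mcoeff_outdom ->.
by rewrite scale0r.
Qed.

Lemma lin_is_linear h : linear (lin h).
Proof.
move=> c f g; set d := (msupp f `|` msupp g)%fset.
have le_d : (msupp (c *: f + g) `<=` d)%fset.
  exact: fsubset_trans (msuppD_le _ _) (fsetSU _ (msuppZ_le _ _)).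
rewrite (linEw _ le_d) (linEw _ (fsubsetUl _ _ : msupp f `<=` d)%fset).
rewrite (linEw _ (fsubsetUr _ _ : msupp g `<=` d)%fset) scaler_sumr -big_split.
by apply: eq_bigr => k _; rewrite mcoeffD mcoeffZ scalerDl scalerA.
Qed.

HB.instance Definition _ h :=
  GRing.isLinear.Build C {malg C[K]} V *:%R (lin h) (lin_is_linear h).

Lemma linU h k : lin h << k >> = h k.
Proof. by rewrite (linEw _ msuppU_le) big_seq_fset1 mcoeffUU scale1r. Qed.

Lemma submod_lin S h f : submod S -> (forall k, S (h k)) -> S (lin h f).
Proof. by move=> SS Sh; apply: submod_sum => // k _; apply: submodZ. Qed.

Lemma span_lin G S h : submod S -> (forall f, G f -> S (lin h f)) ->
  forall f, Defs.span G f -> S (lin h f).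
Proof.
move=> SS; apply: span_ind.
split=> [|f g Sf Sg|c f Sf]; rewrite ?linear0 ?linearD ?linearZ /=.
- exact: submod0.
- exact: submodD.
- exact: submodZ.
Qed.

End LinearExtension.

Lemma lin_malgU (C : comNzRingType) (K : choiceType) (f : {malg C[K]}) :
  lin (fun k : K => << k >>) f = f.
Proof.
rewrite [RHS]monalgE; apply: eq_bigr => k _.
by apply/malgP => k'; rewrite mcoeffZ !mcoeffU; case: eqP; rewrite ?mulr1 ?mulr0.
Qed.

Section LinearModulo.
Context (C : comNzRingType) (A : lalgType C) (V : lmodType C).
Variable J : V -> Prop.
Hypothesis J_submod : submod J.
Implicit Types (F G : A -> V).

Definition linear_mod F := forall c a b, J (F (c *: a + b) - (c *: F a + F b)).

Lemma linear_modP F : (forall a b, J (F (a + b) - F a - F b)) ->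
  (forall c a, J (F (c *: a) - c *: F a)) -> linear_mod F.
Proof.
move=> FD FZ c a b; have := submodD J_submod (FD (c *: a) b) (FZ c a).
by rewrite addrAC addrA subrK opprD addrA.
Qed.

Lemma linear_modD F : linear_mod F -> forall a b, J (F (a + b) - F a - F b).
Proof. by move=> FJ a b; have := FJ 1 a b; rewrite !scale1r opprD addrA. Qed.

Lemma linear_modZ F : linear_mod F -> forall c a, J (F (c *: a) - c *: F a).
Proof.
move=> FJ c a; have F0 : J (F 0).
  have := submodZ (-1) J_submod (FJ 1 0 0).
  by rewrite scaler0 !scale1r addr0 opprD addrA subrr add0r scaleN1r opprK.
have := submodD J_submod (FJ c a 0) F0.
by rewrite addr0 opprD addrA subrK.
Qed.

Lemma linear_mod_ext F G : F =1 G -> linear_mod F -> linear_mod G.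
Proof. by move=> FG FJ c a b; rewrite -!FG. Qed.

Lemma linear_mod_add F G :
  linear_mod F -> linear_mod G -> linear_mod (fun x => F x + G x).
Proof.
move=> FJ GJ c a b; rewrite scalerDr addrACA opprD addrACA.
exact: submodD J_submod (FJ c a b) (GJ c a b).
Qed.

Lemma linear_mod_sum (I : Type) (r : seq I) (F : I -> A -> V) :
  (forall i, linear_mod (F i)) -> linear_mod (fun x => \sum_(i <- r) F i x).
Proof.
move=> FJ; elim: r => [|i r IHr].
  by move=> c a b; rewrite !big_nil scaler0 addr0 subrr; apply: submod0.
apply: linear_mod_ext (linear_mod_add (FJ i) IHr) => x.
by rewrite big_cons.
Qed.

Lemma linear_mod_scale d F : linear_mod F -> linear_mod (fun x => d *: F x).
Proof.
move=> FJ c a b; rewrite scalerA mulrC -scalerA -scalerDr -scalerBr.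
exact: submodZ _ J_submod (FJ c a b).
Qed.

Lemma linear_mod_mulr y F : linear_mod F -> linear_mod (fun x => F (x * y)).
Proof. by move=> FJ c a b; rewrite mulrDl -scalerAl. Qed.

End LinearModulo.

Section MixableShuffles.
Context (C : comNzRingType) (A : comAlgType C) (lam : C).
Implicit Types (xs ys : seq A).

Lemma mshuffle0l ys : mshuffle lam [::] ys = [:: (1, ys)].
Proof. by case: ys. Qed.

Lemma mshuffle0r xs : mshuffle lam xs [::] = [:: (1, xs)].
Proof. by case: xs. Qed.

Lemma mshuffle_cons x xs y ys : mshuffle lam (x :: xs) (y :: ys) =
  [seq (p.1, x :: p.2) | p <- mshuffle lam xs (y :: ys)] ++
  [seq (p.1, y :: p.2) | p <- mshuffle lam (x :: xs) ys] ++
  [seq (lam * p.1, x * y :: p.2) | p <- mshuffle lam xs ys].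
Proof. by []. Qed.

Lemma mshuffle_has (Q : A -> Prop) z xs ys :
  (lam = 0 \/ forall a b, Q b -> Q (a * b)) -> Q z -> z \in xs ++ ys ->
  {in mshuffle lam xs ys, forall p, p.1 = 0 \/ exists2 t, t \in p.2 & Q t}.
Proof.
move=> QM Qz.
have in_cons x s : (exists2 t, t \in s & Q t) -> exists2 t, t \in x :: s & Q t.
  by case=> t ts Qt; exists t; rewrite // inE ts orbT.
elim: xs ys => [|x xs IHxs] ys.
  by rewrite mshuffle0l => zys p /[!inE] /eqP ->; right; exists z.
elim: ys => [|y ys IHys] zxy p.
  by rewrite mshuffle0r => /[!inE] /eqP ->; right; exists z; rewrite // -[_ :: _]cats0.
rewrite mshuffle_cons !mem_cat => /or3P [] /mapP [q q_in ->] /=.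
- have [<- | zx] := eqVneq z x; first by right; exists z; rewrite ?mem_head.
  have zxs : z \in xs ++ y :: ys by move: zxy; rewrite cat_cons inE (negbTE zx).
  by case: (IHxs _ zxs q q_in) => [|/(in_cons x)]; [left | right].
- have [<- | zy] := eqVneq z y; first by right; exists z; rewrite ?mem_head.
  have zys : z \in (x :: xs) ++ ys.
    by move: zxy; rewrite !mem_cat [z \in y :: _]inE (negbTE zy).
  by case: (IHys zys q q_in) => [|/(in_cons y)]; [left | right].
- have merged : z = x \/ z = y -> lam * q.1 = 0 \/ exists2 t, t \in x * y :: q.2 & Q t.
    case: QM => [-> _ | QM zxy']; first by left; rewrite mul0r.
    right; exists (x * y); rewrite ?mem_head //.
    by case: zxy' => <-; [rewrite mulrC |]; apply: QM.
  have inner : z \in xs ++ ys -> lam * q.1 = 0 \/ exists2 t, t \in x * y :: q.2 & Q t.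
    move=> zxs; case: (IHxs _ zxs q q_in) => [-> | /(in_cons (x * y))].
      by left; rewrite mulr0.
    by right.
  move: zxy; rewrite cat_cons inE mem_cat inE.
  case/or4P=> [/eqP zx | zxs | /eqP zy | zys].
  + by apply: merged; left.
  + by apply: inner; rewrite mem_cat zxs.
  + by apply: merged; right.
  + by apply: inner; rewrite mem_cat zys orbT.
Qed.

End MixableShuffles.

Section MixableShuffleSums.
Context (C : comNzRingType) (A : comAlgType C) (lam : C) (V : lmodType C).
Implicit Types (h : seq A -> V) (xs ys : seq A).

Definition msum h xs ys : V := \sum_(p <- mshuffle lam xs ys) p.1 *: h p.2.

Lemma msum0l h ys : msum h [::] ys = h ys.
Proof. by rewrite /msum mshuffle0l big_seq1 scale1r. Qed.

Lemma msum0r h xs : msum h xs [::] = h xs.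
Proof. by rewrite /msum mshuffle0r big_seq1 scale1r. Qed.

Lemma msum_cons h x xs y ys : msum h (x :: xs) (y :: ys) =
  msum (fun s => h (x :: s)) xs (y :: ys) + msum (fun s => h (y :: s)) (x :: xs) ys
  + lam *: msum (fun s => h (x * y :: s)) xs ys.
Proof.
rewrite /msum mshuffle_cons !big_cat !big_map /= addrA scaler_sumr.
by congr (_ + _); apply: eq_bigr => p _; rewrite scalerA.
Qed.

Lemma msumC h xs ys : msum h xs ys = msum h ys xs.
Proof.
elim: xs ys h => [|x xs IHxs] ys h; first by rewrite msum0l msum0r.
elim: ys h => [|y ys IHys] h; first by rewrite msum0l msum0r.
rewrite !msum_cons IHxs IHys IHxs mulrC; congr (_ + _); exact: addrC.
Qed.

Variable J : V -> Prop.
Hypothesis J_submod : submod J.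

Definition multilinear_mod h := forall pre suf, linear_mod J (fun x => h (pre ++ x :: suf)).

Lemma multilinear_mod_cons z h :
  multilinear_mod h -> multilinear_mod (fun s => h (z :: s)).
Proof. by move=> hJ pre; apply: hJ (z :: pre). Qed.

Lemma msum_linear_mod (H : A -> seq A -> V) xs ys :
  (forall s, linear_mod J (fun x => H x s)) -> linear_mod J (fun x => msum (H x) xs ys).
Proof.
move=> HJ; apply: (linear_mod_sum J_submod) => p.
exact: (linear_mod_scale J_submod).
Qed.

Lemma msum_linear_mod_l h pre suf ys :
  multilinear_mod h -> linear_mod J (fun x => msum h (pre ++ x :: suf) ys).
Proof.
elim: pre h ys => [|z pre IHpre] h ys; elim: ys h => [|y ys IHys] h hJ.
- by apply: linear_mod_ext (hJ [::] suf) => x; rewrite msum0r.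
- apply: linear_mod_ext (fun x => esym (msum_cons h x suf y ys)) _.
  apply: (linear_mod_add J_submod); first apply: (linear_mod_add J_submod).
  + by apply: msum_linear_mod => s; apply: hJ [::] s.
  + exact: IHys (multilinear_mod_cons y hJ).
  + apply: (linear_mod_scale J_submod); apply: msum_linear_mod => s.
    exact: linear_mod_mulr (hJ [::] s).
- by apply: linear_mod_ext (hJ (z :: pre) suf) => x; rewrite msum0r.
- apply: linear_mod_ext (fun x => esym (msum_cons h z _ y ys)) _.
  apply: (linear_mod_add J_submod); first apply: (linear_mod_add J_submod).
  + exact: IHpre (multilinear_mod_cons z hJ).
  + exact: IHys (multilinear_mod_cons y hJ).
  + apply: (linear_mod_scale J_submod); exact: IHpre (multilinear_mod_cons (z * y) hJ).
Qed.

Lemma msum_linear_mod_r h xs pre suf :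
  multilinear_mod h -> linear_mod J (fun x => msum h xs (pre ++ x :: suf)).
Proof.
move=> hJ; apply: linear_mod_ext (msum_linear_mod_l pre suf xs hJ) => x.
exact: msumC.
Qed.

End MixableShuffleSums.

Lemma tensor_rel_lin (C : comNzRingType) (A : comAlgType C) (V : lmodType C)
    (J : V -> Prop) (h : tword A -> V) f :
  submod J -> (forall u sv, linear_mod J (fun x => h (wd (u ++ x :: sv)))) ->
  tensor_rel f -> J (lin h f).
Proof.
move=> J_submod hJ [[u [sv [a [b ->]]]] | [u [sv [c [a ->]]]]].
  by rewrite !linearB /= !linU; apply: linear_modD (hJ u sv) a b.
by rewrite linearB linearZ /= !linU; exact: (linear_modZ J_submod (hJ u sv)).
Qed.

Section WordProducts.
Context (C : comNzRingType) (A : comAlgType C) (lam : C).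

Lemma wmulE (u v : tword A) :
  wmul lam u v = msum lam (fun s => << (u.1 * v.1, s) >>) u.2 v.2.
Proof. by []. Qed.

Lemma shmul_linl (f g : Fsh A) : shmul lam f g = lin (fun u => lin (wmul lam u) g) f.
Proof.
apply: eq_bigr => u _; rewrite scaler_sumr.
by apply: eq_bigr => v _; rewrite scalerA.
Qed.

Lemma shmul_linr (f g : Fsh A) :
  shmul lam f g = lin (fun v => lin (fun u => wmul lam u v) f) g.
Proof.
rewrite /shmul exchange_big; apply: eq_bigr => v _; rewrite scaler_sumr.
by apply: eq_bigr => u _; rewrite scalerA mulrC.
Qed.

Variable J : Fsh A -> Prop.
Hypotheses (J_submod : submod J) (J_rel : forall f, tensor_rel f -> J f).

Lemma wd_linear_mod u sv : linear_mod J (fun x => << wd (u ++ x :: sv) >> : Fsh A).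
Proof.
apply: (linear_modP J_submod) => [a b | c a]; apply: J_rel.
  by left; exists u, sv, a, b.
by right; exists u, sv, c, a.
Qed.

Lemma word_multilinear_mod (a : A) :
  multilinear_mod J (fun s => << (a, s) >> : Fsh A).
Proof. by move=> pre; apply: wd_linear_mod (a :: pre). Qed.

Lemma wmul_linear_mod_l u sv (v : tword A) :
  linear_mod J (fun x => wmul lam (wd (u ++ x :: sv)) v).
Proof.
apply: (linear_mod_ext (fun x => esym (wmulE _ _))).
case: u => [|x0 u] /=.
2: by apply: msum_linear_mod_l => //; apply: word_multilinear_mod.
apply: (msum_linear_mod _ J_submod) => s.
exact: linear_mod_mulr (wd_linear_mod [::] s).
Qed.

Lemma wmul_linear_mod_r (w : tword A) u sv :
  linear_mod J (fun x => wmul lam w (wd (u ++ x :: sv))).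
Proof.
apply: (linear_mod_ext (fun x => esym (wmulE _ _))).
case: u => [|y0 u] /=; last by apply: msum_linear_mod_r => //; apply: word_multilinear_mod.
apply: (msum_linear_mod _ J_submod) => s.
by apply: linear_mod_ext (linear_mod_mulr w.1 (wd_linear_mod [::] s)) => x; rewrite mulrC.
Qed.

End WordProducts.

Section WordsIdeal.
Context (C : comNzRingType) (A : comAlgType C).
Implicit Types (G : tword A -> Prop) (f g : Fsh A).

Definition words_ideal G : Fsh A -> Prop :=
  Defs.span (fun f => tensor_rel f \/ exists2 w, G w & f = << w >>).

Lemma words_ideal_submod G : submod (words_ideal G).
Proof. exact: span_submod. Qed.

Lemma words_ideal_rel G f : tensor_rel f -> words_ideal G f.
Proof. by move=> rel_f; apply: span_gen; left. Qed.

Lemma words_ideal_word G w : G w -> words_ideal G << w >>.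
Proof. by move=> Gw; apply: span_gen; right; exists w. Qed.

Lemma words_ideal_mono G G' :
  (forall w, G w -> G' w) -> forall f, words_ideal G f -> words_ideal G' f.
Proof.
move=> GG'; apply: span_mono => f [rel_f | [w /GG' G'w ->]]; first by left.
by right; exists w.
Qed.

Variables (lam : C) (G : tword A -> Prop).
Hypothesis G_mul : forall w v, G w \/ G v ->
  {in mshuffle lam w.2 v.2, forall p, p.1 = 0 \/ G (w.1 * v.1, p.2)}.
Hypothesis G_P : forall w, G w -> G (1, w.1 :: w.2).

Let IG : submod (words_ideal G) := words_ideal_submod G.

Lemma wmul_words_ideal w v : G w \/ G v -> words_ideal G (wmul lam w v).
Proof.
move=> Gwv; rewrite /wmul big_seq.
apply: submod_sum IG _ => p p_in.
have [-> | Gp] := G_mul Gwv p_in; first by rewrite scale0r; apply: submod0 IG.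
exact: submodZ _ IG (words_ideal_word Gp).
Qed.

Lemma words_ideal_mull f g : words_ideal G f -> words_ideal G (shmul lam f g).
Proof.
rewrite shmul_linl; move: f.
apply: span_lin IG _ => f [rel_f | [w Gw ->]]; last first.
  by rewrite linU; apply: submod_lin IG _ => v; apply: wmul_words_ideal; left.
rewrite -shmul_linl shmul_linr; apply: submod_lin IG _ => v.
apply: tensor_rel_lin IG _ rel_f => u sv.
by apply: wmul_linear_mod_l; [exact: IG | exact: words_ideal_rel].
Qed.

Lemma words_ideal_mulr f g : words_ideal G f -> words_ideal G (shmul lam g f).
Proof.
rewrite shmul_linr; move: f.
apply: span_lin IG _ => f [rel_f | [w Gw ->]]; last first.
  by rewrite linU; apply: submod_lin IG _ => u; apply: wmul_words_ideal; right.
rewrite -shmul_linr shmul_linl; apply: submod_lin IG _ => u.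
apply: tensor_rel_lin IG _ rel_f => u' sv.
by apply: wmul_linear_mod_r; [exact: IG | exact: words_ideal_rel].
Qed.

Lemma words_ideal_shP f : words_ideal G f -> words_ideal G (shP f).
Proof.
change (words_ideal G f -> words_ideal G (lin (fun u => << ((1 : A), u.1 :: u.2) >>) f)).
move: f; apply: span_lin IG _ => f [rel_f | [w Gw ->]]; last first.
  by rewrite linU; apply: words_ideal_word; apply: G_P.
apply: tensor_rel_lin IG _ rel_f => u sv.
apply: linear_mod_ext (wd_linear_mod IG (@words_ideal_rel G) (1 :: u) sv) => x.
by case: u.
Qed.

Lemma baxter_ideal_words_ideal : baxter_ideal lam (words_ideal G).
Proof.
split; [exact: words_ideal_submod | exact: words_ideal_rel | | exact: words_ideal_shP].
by move=> f g If; split; [apply: words_ideal_mull | apply: words_ideal_mulr].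
Qed.

End WordsIdeal.

Section NoetherianObstruction.
Context (C : comNzRingType) (A : comAlgType C).
Implicit Types (I : A -> Prop) (w : tword A).

Definition ideal_words I w := exists2 x, x \in w.1 :: w.2 & I x.

Lemma ideal_submod I : ring_ideal I -> submod I.
Proof. by case=> I0 ID IM; split=> // c x Ix; rewrite -mulr_algl; apply: IM. Qed.

Lemma ideal_words_mul lam I : ring_ideal I ->
  forall w v, ideal_words I w \/ ideal_words I v ->
  {in mshuffle lam w.2 v.2, forall p, p.1 = 0 \/ ideal_words I (w.1 * v.1, p.2)}.
Proof.
case=> _ _ IM w v Iwv p p_in.
have [Iwv1 | [z zwv Iz]] : I (w.1 * v.1) \/ exists2 z, z \in w.2 ++ v.2 & I z.
  case: Iwv => -[z]; rewrite inE => /orP [/eqP -> | zs] Iz.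
  - by left; rewrite mulrC; apply: IM.
  - by right; exists z; rewrite // mem_cat zs.
  - by left; apply: IM.
  - by right; exists z; rewrite // mem_cat zs orbT.
  by right; exists (w.1 * v.1); rewrite ?mem_head.
have [|[t tp It]] := mshuffle_has (or_intror IM) Iz zwv p_in; first by left.
by right; exists t; rewrite // inE tp orbT.
Qed.

Lemma ideal_words_P I w : ideal_words I w -> ideal_words I (1, w.1 :: w.2).
Proof. by case=> x xw Ix; exists x; rewrite // inE xw orbT. Qed.

Definition deg0 w : A := if w.2 is [::] then w.1 else 0.

Lemma deg0_wd u sv :
  (forall x, deg0 (wd (u ++ x :: sv)) = x) \/ (forall x, deg0 (wd (u ++ x :: sv)) = 0).
Proof. by case: u => [|u0 u]; [case: sv; [left | right] | right] => // x; case: u. Qed.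

Lemma deg0_words_ideal I f :
  ring_ideal I -> words_ideal (ideal_words I) f -> I (lin deg0 f).
Proof.
move=> /ideal_submod IS; move: f.
apply: span_lin (IS) _ => f [rel_f | [w [x xw Ix] ->]].
  apply: tensor_rel_lin (IS) _ rel_f => u sv c a b.
  have [deg0_id | deg0_0] := deg0_wd u sv.
    by rewrite !deg0_id subrr; apply: submod0 IS.
  by rewrite !deg0_0 scaler0 addr0 subrr; apply: submod0 IS.
rewrite linU /deg0; case: w xw => w1 [|? ?] /=; last by move=> _; apply: submod0 IS.
by rewrite inE => /eqP <-.
Qed.

Lemma noetherian_of_acc_baxter (lam : C) : acc (@baxter_ideal C A lam) -> noetherian A.
Proof.
apply: (acc_embedding (F := fun I => words_ideal (ideal_words I))).
- move=> I II; apply: baxter_ideal_words_ideal.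
    exact: ideal_words_mul.
  exact: ideal_words_P.
- move=> X Y XY; apply: words_ideal_mono => w [x xw Xx].
  by exists x; last exact: XY.
- move=> X Y _ IY XY x Xx.
  have Xword : ideal_words X (x, [::]) by exists x; rewrite ?mem_head.
  by have := deg0_words_ideal IY (XY _ (words_ideal_word Xword)); rewrite linU.
Qed.

End NoetherianObstruction.

Section TensorObstruction.
Context (C : comNzRingType) (A : comAlgType C).
Implicit Types (M : A -> Prop) (S : Ft2 A -> Prop) (w : tword A) (f : Ft2 A).

Definition right_factors S (b : A) := forall a, S << (a, b) >>.

Definition right_factor_words S w := exists2 b, b \in w.2 & right_factors S b.

Lemma right_factor_words_mul S w v :
  right_factor_words S w \/ right_factor_words S v ->
  {in mshuffle 0 w.2 v.2, forall p, p.1 = 0 \/ right_factor_words S (w.1 * v.1, p.2)}.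
Proof.
move=> Swv; have [z zwv Sz] : exists2 z, z \in w.2 ++ v.2 & right_factors S z.
  by case: Swv => -[z zs Sz]; exists z; rewrite // mem_cat zs ?orbT.
exact: mshuffle_has (or_introl erefl) Sz zwv.
Qed.

Lemma right_factor_words_P S w :
  right_factor_words S w -> right_factor_words S (1, w.1 :: w.2).
Proof. by case=> b bw Sb; exists b; rewrite // inE bw orbT. Qed.

Lemma tensorAM_submod M : submod (tensorAM M).
Proof. exact: span_submod. Qed.

Lemma tensorAM_rel M f : tensor2_rel f -> tensorAM M f.
Proof. by move=> rel_f; apply: span_gen; left. Qed.

Lemma tensorAM_linear_modl M (b : A) :
  linear_mod (tensorAM M) (fun x => << (x, b) >> : Ft2 A).
Proof.
apply: (linear_modP (tensorAM_submod M)) => [a a' | c a]; apply: tensorAM_rel.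
  by left; exists a, a', b.
by right; right; left; exists c, a, b.
Qed.

Lemma tensorAM_linear_modr M (a : A) :
  linear_mod (tensorAM M) (fun x => << (a, x) >> : Ft2 A).
Proof.
apply: (linear_modP (tensorAM_submod M)) => [b b' | c b]; apply: tensorAM_rel.
  by right; left; exists a, b, b'.
by right; right; right; exists c, a, b.
Qed.

Definition deg1 w : Ft2 A := if w.2 is [:: b] then << (w.1, b) >> else 0.

Definition embed1 (ab : A * A) : Fsh A := << (ab.1, [:: ab.2]) >>.

Lemma deg1_embed1 f : lin deg1 (lin embed1 f) = f.
Proof.
rewrite -{2}[f]lin_malgU [lin embed1 f]/lin [RHS]/lin linear_sum.
by apply: eq_bigr => -[a b] _; rewrite linearZ /= linU.
Qed.

Lemma deg1_wd u sv :
  [\/ exists b, forall x, deg1 (wd (u ++ x :: sv)) = << (x, b) >>,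
      exists a, forall x, deg1 (wd (u ++ x :: sv)) = << (a, x) >> |
      forall x, deg1 (wd (u ++ x :: sv)) = 0].
Proof.
case: u => [|a [|u0 u]]; last by constructor 3 => x; case: u.
  by case: sv => [|b [|? ?]]; [constructor 3 | constructor 1; exists b | constructor 3].
by case: sv => [|? ?]; [constructor 2; exists a | constructor 3].
Qed.

Lemma deg1_words_ideal M (g : Fsh A) :
  words_ideal (right_factor_words (tensorAM M)) g -> tensorAM M (lin deg1 g).
Proof.
have TS := tensorAM_submod M.
move: g; apply: span_lin (TS) _ => g [rel_g | [w [b bw Sb] ->]]; last first.
  rewrite linU /deg1; case: w bw => a [|b' [|? ?]] //=; last by move=> _; apply: submod0 TS.
  by rewrite inE => /eqP <-; apply: Sb.
apply: tensor_rel_lin (TS) _ rel_g => u sv.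
have [[b E] | [a E] | E] := deg1_wd u sv.
- by apply: linear_mod_ext (tensorAM_linear_modl b) => x; rewrite E.
- by apply: linear_mod_ext (tensorAM_linear_modr a) => x; rewrite E.
- by move=> c a b; rewrite !E scaler0 addr0 subrr; apply: submod0 TS.
Qed.

Lemma embed1_words_ideal M f :
  tensorAM M f -> words_ideal (right_factor_words (tensorAM M)) (lin embed1 f).
Proof.
move: f; apply: span_lin (words_ideal_submod _) _ => f [rel_f | [a [b [Mb ->]]]].
  case: rel_f => [[a [a' [b ->]]] | [[a [b [b' ->]]] | [[c [a [b ->]]] | [c [a [b ->]]]]]];
    apply: words_ideal_rel.
  - by rewrite !linearB /= !linU; left; exists [::], [:: b], a, a'.
  - by rewrite !linearB /= !linU; left; exists [:: a], [::], b, b'.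
  - by rewrite linearB linearZ /= !linU; right; exists [::], [:: b], c, a.
  - by rewrite linearB linearZ /= !linU; right; exists [:: a], [::], c, b.
rewrite linU; apply: words_ideal_word; exists b; rewrite ?mem_head // => a'.
by apply: span_gen; right; exists a', b.
Qed.

Lemma acc_calM_of_acc_baxter : acc (@baxter_ideal C A 0) -> acc (@calM C A).
Proof.
apply: (acc_embedding (F := fun S => words_ideal (right_factor_words S))).
- move=> S _; apply: baxter_ideal_words_ideal.
    exact: right_factor_words_mul.
  exact: right_factor_words_P.
- move=> X Y XY; apply: words_ideal_mono => w [b bw Xb].
  by exists b => // a; apply: XY.
- move=> _ _ [M [_ ->]] [M' [_ ->]] XY f Xf.
  rewrite -[f]deg1_embed1; apply: deg1_words_ideal; apply: XY.
  exact: embed1_words_ideal.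
Qed.

End TensorObstruction.

Theorem theorem4p4 (C : comNzRingType) (A : comAlgType C) :
  (~ acc (@calM C A) -> ~ acc (@baxter_ideal C A 0)) /\
  (~ noetherian A -> forall lam : C, ~ acc (@baxter_ideal C A lam)).
Proof.
split=> [not_acc_calM acc_baxter | not_noetherian lam acc_baxter].
  exact/not_acc_calM/acc_calM_of_acc_baxter.
exact/not_noetherian/noetherian_of_acc_baxter/acc_baxter.
Qed.
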